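(* Let $\mathcal N$ be a phylogenetic network on $X$ with vertex set $V$ and $|X|\ge 2$, fix an ordering $v_1,\dots,v_t$ of $V\setminus X$, and let $\Sigma=\Sigma_{\mathcal N}=\{(x,\sigma(x)):x\in X\}$ be the corresponding ancestral profile. Let $\{a,b\}\subseteq X$. (i) Suppose $\{a,b\}$ is a cherry of $\mathcal N$. Choose any index $j$ with $\sigma_j(a)=\sigma_j(b)=1$ and $\sigma_j(x)=0$ for all $x\in X\setminus\{a,b\}$, and let $\Sigma'=\{(x,\sigma'(x)):x\in X\setminus\{b\}\}$, where $\sigma'(x)$ is obtained from $\sigma(x)$ by deleting the $j$-th entry. Then $\Sigma'$ is the ancestral profile of the network $\mathcal N'$ obtained from $\mathcal N$ by reducing $b$, with respect to some ordering of the non-leaf vertices of $\mathcal N'$. (ii) Suppose $\{a,b\}$ is a reticulated cherry of $\mathcal N$ with reticulation leaf $b$. Choose any index $j$ with $\sigma_j(a)=\sigma_j(b)=1$ and $\sigma_j(x)=0$ for all $x\in X\setminus\{a,b\}$, and any index $k$ with $\sigma_k(b)=1$ and $\sigma_k(x)=0$ for all $x\in X\setminus\{b\}$. Let $\Sigma'=\{(x,\sigma'(x)):x\in X\}$, where for $x\neq b$, $\sigma'(x)$ is obtained from $\sigma(x)$ by deleting the entries $j$ and $k$, and $\sigma'(b)$ is the tuple with entries $\sigma_i(b)-\sigma_i(a)$ for $i\notin\{j,k\}$ (in the original order). Then $\Sigma'$ is the ancestral profile of the network $\mathcal N'$ obtained from $\mathcal N$ by cutting $\{a,b\}$, with respect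 to some ordering of the non-leaf vertices of $\mathcal N'$.
   Context: A phylogenetic network on $X$ ($X$ non-empty finite) is a rooted acyclic directed graph with no parallel arcs such that: the unique root has in-degree $0$ and out-degree $2$; every vertex of out-degree $0$ has in-degree $1$, and the set of such vertices (leaves) is $X$; every other vertex has either in-degree $1$ and out-degree $2$ (tree vertex) or in-degree $2$ and out-degree $1$ (reticulation). If $|X|=1$ a single vertex is also allowed. For an ordering $v_1,\dots,v_t$ of the non-leaf vertices and $x\in X$, the ancestral tuple $\sigma(x)=(\sigma_1(x),\dots,\sigma_t(x))$ has $\sigma_i(x)$ equal to the number of directed paths from $v_i$ to $x$; the ancestral profile is $\{(x,\sigma(x)):x\in X\}$. For a $2$-element subset $\{a,b\}\subseteq X$ with parents $p_a,p_b$: $\{a,b\}$ is a cherry if $p_a=p_b$; it is a reticulated cherry with reticulation leaf $b$ if $p_b$ is a reticulation and $(p_a,p_b)$ is an arc. Reducing $b$ in a cherry means deleting $b$ and suppressing the resulting vertex of in-degree 1 and out-degree 1 (if the common parent is the root, delete $b$ and the root, leaving the single vertex $a$). Cutting a reticulated cherry $\{a,b\}$ means deleting the arc $(p_a,p_b)$ and suppressing the two resulting vertices of in-degree 1 and out-degree 1. *)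

From mathcomp Require Import all_boot.
Unset Printing Implicit Defensive.

(* A directed graph without parallel arcs: vertex set V (finite), arc relation E. *)
Definition indeg {V : finType} (E : rel V) (v : V) : nat := #|[set u | E u v]|.
Definition outdeg {V : finType} (E : rel V) (v : V) : nat := #|[set w | E v w]|.
Definition is_leaf {V : finType} (E : rel V) (v : V) : bool := outdeg E v == 0.

Definition acyclic {V : finType} (E : rel V) : Prop :=
  forall (v : V) (t : seq V), t != [::] -> path E v t -> last v t != v.

(* phylogenetic network on its leaf set X = {v | outdeg v = 0} *)
Definition phylo_network {V : finType} (E : rel V) : Prop :=
  acyclic E /\
  (#|V| = 1 \/
   exists r : V,
     [/\ forall v, (indeg E v == 0) = (v == r),
         outdeg E r = 2 &
         forall v, v != r ->
           [\/ indeg E v = 1 /\ outdeg E v = 0,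
               indeg E v = 1 /\ outdeg E v = 2 |
               indeg E v = 2 /\ outdeg E v = 1]]).

(* number of directed paths from v to x (paths = vertex-distinct walks;
   such a path has fewer than #|V| arcs) *)
Definition npaths {V : finType} (E : rel V) (v x : V) : nat :=
  \sum_(k < #|V|)
     #|[set t : k.-tuple V | [&& path E v t, last v t == x & uniq (v :: t)]]|.

Definition is_ordering {V : finType} (E : rel V) (s : seq V) : Prop :=
  uniq s /\ forall v, (v \in s) = ~~ is_leaf E v.

Definition anc_tuple {V : finType} (E : rel V) (s : seq V) (x : V) : seq nat :=
  [seq npaths E v x | v <- s].

(* ancestral profile of (V',E') with ordering s, leaves labelled via lab,
   as a relation {(lab x, sigma(x)) : x leaf} *)
Definition profile {V' : finType} (E' : rel V') (s : seq V') {T : Type}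
  (lab : V' -> T) : T -> seq nat -> Prop :=
  fun x sg => exists x' : V', [/\ is_leaf E' x', lab x' = x & sg = anc_tuple E' s x'].

Definition del_idx (J : seq nat) (s : seq nat) : seq nat :=
  [seq nth 0 s i | i <- iota 0 (size s) & i \notin J].

(* Reducing b in a cherry {a,b} with common parent p: delete b and p,
   joining the parent of p (if any) to a. *)
Definition red_vert {V : finType} (b p : V) := {v : V | (v != b) && (v != p)}.
Definition red_rel {V : finType} (E : rel V) (b p : V) : rel (red_vert b p) :=
  fun u w => E (val u) (val w) || (E (val u) p && E p (val w)).

(* Cutting the reticulated cherry {a,b} (parents pa, pb; arc (pa,pb)):
   delete arc (pa,pb) and suppress pa and pb. *)
Definition cut_vert {V : finType} (pa pb : V) := {v : V | (v != pa) && (v != pb)}.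
Definition cut_rel {V : finType} (E : rel V) (pa pb : V) : rel (cut_vert pa pb) :=
  fun u w =>
    [|| E (val u) (val w),
        E (val u) pa && E pa (val w) && (val w != pb)
      | E (val u) pb && E pb (val w) && (val u != pa)].

(* Path counts in an acyclic digraph are the unique solution of
     N(v, x) = [v == x] + \sum_(v -> w) N(w, x).
   Reducing a cherry or cutting a reticulated cherry preserves this recursion at
   every surviving vertex, so the path counts to a surviving leaf x do not change,
   except after a cut for x = b: there exactly the paths through the deleted arc
   (pa, pb) disappear, and these are as many as the paths to a.  The suppressed
   vertex p (resp. pa and pb) has the same column in the profile as the vertex at
   position j (resp. j and k); after swapping them in the ordering, deleting these
   entries amounts to deleting the suppressed vertices. *)

From mathcomp Require Import all_boot fingroup perm.
Set Implicit Arguments. Unset Strict Implicit.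

Lemma card_setE (T : finType) (P : pred T) : #|[set t | P t]| = \sum_t P t.
Proof. by rewrite -sum1dep_card big_mkcond; apply: eq_bigr => t _; case: (P t). Qed.

Lemma sum_sig (I : finType) (P : pred I) (F : I -> nat) :
  \sum_(i | P i) F i = \sum_(u : {i | P i}) F (val u).
Proof.
rewrite (reindex_omap (val : {i | P i} -> I) insub) => [|i Pi]; last by rewrite insubT.
by apply: eq_bigl => -[i Pi] /=; rewrite insubT /= Pi; apply/eqP; congr Some; apply: val_inj.
Qed.

Lemma sum_sig2 (I : finType) (c d : I) (F : I -> nat) : c != d ->
  \sum_(u : {i | (i != c) && (i != d)}) F (val u) + F c + F d = \sum_i F i.
Proof.
move=> cd; rewrite -sum_sig [RHS](bigD1 c) // [in RHS](bigD1 d) 1?eq_sym //=.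
by rewrite [RHS]addnA [RHS]addnC addnA.
Qed.

Lemma sum_sig_pred1 (I : finType) (P : pred I) (c : I) (F : I -> nat) : P c ->
  \sum_(u : {i | P i}) (val u == c) * F (val u) = F c.
Proof.
move=> Pc; rewrite -(sum_sig P (fun i => (i == c) * F i)) (bigD1 c) //= eqxx mul1n big1 ?addn0 //.
by move=> i /andP[_ /negbTE ->].
Qed.

Lemma sum_mul_eq (I : finType) (F : I -> nat) (c : I) : \sum_i F i * (i == c) = F c.
Proof. by rewrite (bigD1 c) //= eqxx muln1 big1 ?addn0 // => i /negbTE ->; rewrite muln0. Qed.

Lemma map_iota_filter (T : Type) (d : T) (s : seq T) (P : pred T) (J : seq nat)
    (h : nat -> nat) (g : T -> nat) :
  (forall i, i < size s -> (i \in J) = ~~ P (nth d s i)) ->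
  (forall i, i < size s -> h i = g (nth d s i)) ->
  [seq h i | i <- iota 0 (size s) & i \notin J] = map g (filter P s).
Proof.
move=> idxJ hg; rewrite -[in filter P s](mkseq_nth d s) /mkseq filter_map -map_comp.
rewrite -(@eq_in_filter _ (fun i => i \notin J)) => [|i]; last first.
  by rewrite mem_iota => /andP[_ i_lt] /=; rewrite idxJ // negbK.
by apply/eq_in_map => i; rewrite mem_filter mem_iota => /and3P[_ _ i_lt]; apply: hg.
Qed.

Lemma del_idx_filter (T : Type) (d : T) (s : seq T) (P : pred T) (J : seq nat) (g : T -> nat) :
  (forall i, i < size s -> (i \in J) = ~~ P (nth d s i)) ->
  del_idx J (map g s) = map g (filter P s).
Proof.
by move=> idxJ; rewrite /del_idx size_map; apply: map_iota_filter idxJ _ => i; apply: nth_map.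
Qed.

Section Digraph.
Variables (V : finType) (E : rel V).

Lemma outdegE v : outdeg E v = \sum_w E v w.
Proof. exact: card_setE. Qed.

Lemma leafP v : is_leaf E v = [forall w, ~~ E v w].
Proof.
rewrite /is_leaf outdegE sum_nat_eq0; apply: eq_forallb => w.
by case: (E v w).
Qed.

Lemma nonleaf_of v w : E v w -> ~~ is_leaf E v.
Proof. by move=> Evw; rewrite leafP negb_forall; apply/existsP; exists w; rewrite negbK. Qed.

Lemma succ2P v c d w : outdeg E v <= 2 -> c != d -> E v c -> E v d ->
  E v w -> (w == c) || (w == d).
Proof.
move=> deg2 cd Evc Evd Evw.
have sub_cd : [set c; d] \subset [set w | E v w].
  by apply/subsetP => y; rewrite !inE => /orP[] /eqP ->.
have succ_cd : [set c; d] = [set w | E v w].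
  by apply/eqP; rewrite eqEcard sub_cd cards2 cd.
have : w \in [set w | E v w] by rewrite inE.
by rewrite -succ_cd !inE.
Qed.

Lemma succ1P v c w : outdeg E v = 1 -> E v c -> E v w -> w = c.
Proof.
move/eqP/cards1P => [z succ_z] Evc Evw.
have : c \in [set u | E v u] by rewrite inE.
have : w \in [set u | E v u] by rewrite inE.
by rewrite succ_z !inE => /eqP -> /eqP ->.
Qed.

Lemma pred1P v y z : indeg E v = 1 -> E y v -> E z v -> y = z.
Proof.
move/eqP/cards1P => [c pred_c] Eyv Ezv.
have : y \in [set u | E u v] by rewrite inE.
have : z \in [set u | E u v] by rewrite inE.
by rewrite pred_c !inE => /eqP -> /eqP ->.
Qed.

Lemma acyclic_rank (m : V -> nat) : (forall u w, E u w -> m w < m u) -> acyclic E.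
Proof.
move=> Em v t t_n0; suff : path E v t -> m (last v t) < m v.
  by move=> /[apply]; apply: contraTneq => ->; rewrite ltnn.
elim: t v t_n0 => // w t IHt v _ /= /andP[Evw Ept].
case: t IHt Ept => [|w' t] IHt Ept; first exact: Em.
exact: ltn_trans (IHt _ isT Ept) (Em _ _ Evw).
Qed.

Lemma acyclic_notin_path v w t : acyclic E -> E v w -> path E w t -> v \notin w :: t.
Proof.
move=> acE Evw Ept; apply/negP => v_in.
have : path E v (w :: t) by rewrite /= Evw.
case/splitPr: v_in => p1 p2; rewrite cat_path /= => /and3P[Ep1 Ev _].
have := acE v (rcons p1 v); rewrite rcons_path Ep1 Ev last_rcons eqxx.
by case: p1 {Ep1 Ev} => [|? ?] /(_ isT isT).
Qed.

Lemma acyclic_rank_exists :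
  acyclic E -> exists m : V -> nat, forall u w, E u w -> m w < m u.
Proof.
move=> acE; exists (fun v => #|[set y | connect E v y]|) => u w Euw.
apply: proper_card; apply/properP; split.
  by apply/subsetP => y; rewrite !inE; apply: connect_trans; apply: connect1.
exists u; rewrite !inE ?connect0 //; apply/negP => /connectP[t Ewt Eu].
by have := acyclic_notin_path acE Euw Ewt; rewrite Eu mem_last.
Qed.

Lemma acyclic_ind (P : V -> Prop) : acyclic E ->
  (forall v, (forall w, E v w -> P w) -> P v) -> forall v, P v.
Proof.
move=> /acyclic_rank_exists[m Em] IH v.
elim: {v}(m v) {-2}v (leqnn (m v)) => [|n IHn] v mv; apply: IH => w Evw.
  by have := Em _ _ Evw; rewrite ltnNge (leq_trans mv).
by apply: IHn; rewrite -ltnS (leq_trans (Em _ _ Evw)).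
Qed.

Lemma acyclic_rec_unique (r f g : V -> nat) :
  acyclic E ->
  (forall v, f v = r v + \sum_w E v w * f w) ->
  (forall v, g v = r v + \sum_w E v w * g w) -> forall v, f v = g v.
Proof.
move=> acE recf recg; apply: (acyclic_ind acE) => v IH.
rewrite recf recg; congr addn; apply: eq_bigr => w _.
by case Evw: (E v w); rewrite ?mul0n // IH.
Qed.

Lemma sum_succ2 v c d (F : V -> nat) :
  outdeg E v <= 2 -> c != d -> E v c -> E v d ->
  \sum_w E v w * F w = F c + F d.
Proof.
move=> deg2 cd Evc Evd; rewrite -(sum_sig2 (fun w => E v w * F w) cd) Evc Evd !mul1n.
rewrite big1 // => -[w /= /andP[wc wd]]; case Evw: (E v w) => //.
by have := succ2P deg2 cd Evc Evd Evw; rewrite (negbTE wc) (negbTE wd).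
Qed.

Lemma sum_succ1 v c (F : V -> nat) :
  outdeg E v = 1 -> E v c -> \sum_w E v w * F w = F c.
Proof.
move=> deg1 Evc; rewrite (bigD1 c) //= Evc mul1n big1 ?addn0 // => w wc.
by case Evw: (E v w) => //; rewrite (succ1P deg1 Evc Evw) eqxx in wc.
Qed.

End Digraph.

Section PathCount.
Variables (V : finType) (E : rel V) (x : V).
Hypothesis acE : acyclic E.

Definition npaths_len k v :=
  #|[set t : k.-tuple V | [&& path E v t, last v t == x & uniq (v :: t)]]|.

Lemma npaths_len0 v : npaths_len 0 v = (v == x).
Proof.
rewrite /npaths_len card_setE (eq_bigr (fun _ => nat_of_bool (v == x))).
  by rewrite sum_nat_const card_tuple mul1n.
by move=> t _; rewrite tuple0 /= andbT.
Qed.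

Lemma npaths_lenS k v : npaths_len k.+1 v = \sum_w E v w * npaths_len k w.
Proof.
rewrite /npaths_len card_setE.
rewrite (reindex (fun p : V * k.-tuple V => [tuple of p.1 :: p.2])); last first.
  exists (fun t : k.+1.-tuple V => (thead t, [tuple of behead t])).
    by move=> [w t] _ /=; rewrite theadE; congr pair; apply: val_inj.
  by move=> t _ /=; rewrite [in RHS](tuple_eta t).
rewrite -(pair_bigA _ (fun w (t : k.-tuple V) =>
  nat_of_bool [&& path E v (w :: t), last v (w :: t) == x & uniq (v :: w :: t)])).
apply: eq_bigr => w _; rewrite card_setE big_distrr; apply: eq_bigr => t _ /=.
case Evw: (E v w); rewrite ?mul0n //= mul1n.
case Ewt: (path E w t) => //=.
by rewrite (negbTE (acyclic_notin_path acE Evw Ewt)).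
Qed.

(* Prepending v to such a path would give #|V|.+1 distinct vertices. *)
Lemma npaths_len_succ_max v w : E v w -> npaths_len #|V|.-1 w = 0.
Proof.
move=> Evw; apply/eqP; rewrite cards_eq0; apply/eqP/setP => t.
rewrite !inE; apply/negbTE/negP => /and3P[Ewt _ uniq_t].
have uniq_vt : uniq (v :: w :: t).
  by rewrite cons_uniq uniq_t (acyclic_notin_path acE Evw Ewt).
have := max_card (mem (v :: w :: t)); rewrite (card_uniqP uniq_vt) /= size_tuple.
by rewrite prednK ?ltnn //; apply/card_gt0P; exists v.
Qed.

Lemma npathsE v : npaths E v x = \sum_(k < #|V|) npaths_len k v.
Proof. by []. Qed.

Lemma npaths_rec v : npaths E v x = (v == x) + \sum_w E v w * npaths E w x.
Proof.
have last0 w : E v w -> npaths_len #|V|.-1 w = 0 by apply: npaths_len_succ_max.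
have : 0 < #|V| by apply/card_gt0P; exists v.
rewrite npathsE (eq_bigr (fun w => E v w * \sum_(k < #|V|) npaths_len k w)) => [|w _]; last first.
  by rewrite npathsE.
move: last0; case: #|V| => [//|n] /= last0 _.
rewrite big_ord_recl npaths_len0; congr addn.
rewrite (eq_bigr (fun k : 'I_n => \sum_w E v w * npaths_len k w)) => [|k _]; last first.
  exact: npaths_lenS.
rewrite exchange_big; apply: eq_bigr => w _ /=.
rewrite big_ord_recr -big_distrr /=.
by case Evw: (E v w); rewrite ?mul0n // last0 ?addn0.
Qed.

Lemma npaths_leaf v : is_leaf E v -> npaths E v x = (v == x).
Proof.
rewrite leafP => /forallP noE; rewrite npaths_rec big1 ?addn0 // => w _.
by rewrite (negbTE (noE w)).
Qed.

Lemma npaths_unique (f : V -> nat) :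
  (forall v, f v = (v == x) + \sum_w E v w * f w) -> forall v, f v = npaths E v x.
Proof. by move=> recf; apply: acyclic_rec_unique recf npaths_rec. Qed.

Lemma npaths_succ2 v c d :
  outdeg E v <= 2 -> c != d -> E v c -> E v d -> v != x ->
  npaths E v x = npaths E c x + npaths E d x.
Proof.
by move=> deg2 cd Evc Evd vx; rewrite npaths_rec (sum_succ2 _ deg2 cd Evc Evd) (negbTE vx).
Qed.

Lemma npaths_succ1 v c :
  outdeg E v = 1 -> E v c -> v != x -> npaths E v x = npaths E c x.
Proof. by move=> deg1 Evc vx; rewrite npaths_rec (sum_succ1 _ deg1 Evc) (negbTE vx). Qed.

End PathCount.

Section Network.
Variables (V : finType) (E : rel V).
Hypotheses (netE : phylo_network E) (leaves2 : 1 < #|[set x | is_leaf E x]|).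

Lemma network_acyclic : acyclic E.
Proof. by case: netE. Qed.

Lemma network_degrees v :
  [\/ indeg E v = 0 /\ outdeg E v = 2, indeg E v = 1 /\ outdeg E v = 0,
      indeg E v = 1 /\ outdeg E v = 2 | indeg E v = 2 /\ outdeg E v = 1].
Proof.
case: netE => _ [V1 | [r [root_r deg_r deg_v]]].
  by have := max_card (mem [set x | is_leaf E x]); rewrite V1 leqNgt leaves2.
have [-> | vr] := eqVneq v r.
  by apply: Or41; split=> //; apply/eqP; rewrite root_r.
by case: (deg_v v vr) => ?; [apply: Or42 | apply: Or43 | apply: Or44].
Qed.

Lemma leaf_indeg v : is_leaf E v -> indeg E v = 1.
Proof. by rewrite /is_leaf; case: (network_degrees v) => -[-> ->]. Qed.

Lemma outdeg_le2 v : outdeg E v <= 2.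
Proof. by case: (network_degrees v) => -[_ ->]. Qed.

Lemma reticulation_outdeg v : indeg E v = 2 -> outdeg E v = 1.
Proof. by case: (network_degrees v) => -[-> //]. Qed.

End Network.

Section Orderings.
Variables (V : finType) (E : rel V).

Lemma anc_tuple_nth (s : seq V) d x j :
  j < size s -> nth 0 (anc_tuple E s x) j = npaths E (nth d s j) x.
Proof. exact: nth_map. Qed.

Lemma is_ordering_tperm (s : seq V) x y : is_ordering E s ->
  ~~ is_leaf E x -> ~~ is_leaf E y -> is_ordering E (map (tperm x y) s).
Proof.
move=> [uniq_s mem_s] lx ly; split; first by rewrite (map_inj_uniq (@perm_inj _ _)).
move=> v; rewrite -{1}(tpermK x y v) (mem_map (@perm_inj _ _)) !mem_s.
by case: tpermP => [-> | -> |] //; rewrite lx ly.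
Qed.

Lemma anc_tuple_tperm (s : seq V) x y z : npaths E x z = npaths E y z ->
  anc_tuple E (map (tperm x y) s) z = anc_tuple E s z.
Proof.
by move=> xy; rewrite /anc_tuple -map_comp; apply: eq_map => v /=; case: tpermP => [-> | -> |].
Qed.

Variables (P : pred V) (E' : rel {v | P v}).
Hypothesis leafE' : forall u, is_leaf E' u = is_leaf E (val u).

Definition insub_seq (s : seq V) : seq {v | P v} := pmap insub s.

Lemma is_ordering_sub (s : seq V) : is_ordering E s -> is_ordering E' (insub_seq s).
Proof.
move=> [uniq_s mem_s]; split; first exact: pmap_sub_uniq.
by move=> u; rewrite mem_pmap_sub mem_s leafE'.
Qed.

Lemma anc_tuple_sub (s : seq V) (x : {v | P v}) (f : V -> nat) :
  (forall u, val u \in s -> npaths E' u x = f (val u)) ->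
  anc_tuple E' (insub_seq s) x = map f (filter P s).
Proof.
move=> npathsE'; transitivity (map (f \o val) (insub_seq s)).
  by apply/eq_in_map => u; rewrite mem_pmap_sub; apply: npathsE'.
by rewrite map_comp (pmap_filter (@insubK _ _ _)) (eq_filter (isSome_insub _)).
Qed.

Lemma profile_sub (s : seq {v | P v}) (tup : V -> seq nat) :
  (forall u, is_leaf E (val u) -> anc_tuple E' s u = tup (val u)) ->
  forall x sg, profile E' s val x sg <-> [/\ is_leaf E x, P x & sg = tup x].
Proof.
move=> ancE' x sg; split => [[u [lu <- ->]] | [lx Px ->]].
  by rewrite leafE' in lu; rewrite ancE' //; split => //; apply: valP.
by exists (exist _ x Px); rewrite leafE' ancE'.
Qed.

End Orderings.

Section Reduce.
Variables (V : finType) (E : rel V) (a b p : V).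
Hypotheses (acE : acyclic E) (ab : a != b) (la : is_leaf E a) (lb : is_leaf E b)
  (Epa : E p a) (Epb : E p b) (in_a : indeg E a = 1) (in_b : indeg E b = 1)
  (deg_p : outdeg E p <= 2).

Local Notation V' := (red_vert b p).
Local Notation E' := (red_rel E b p).

Let ap : a != p. Proof. by apply: contraNneq (nonleaf_of Epa) => <-. Qed.
Let bp : b != p. Proof. by apply: contraNneq (nonleaf_of Epb) => <-. Qed.

Lemma red_relE (u w : V') : E' u w = E (val u) (val w) + E (val u) p * (val w == a) :> nat.
Proof.
case: u w => [u uP] [w wP]; rewrite /red_rel /=.
case/andP: uP => ub up; case/andP: wP => wb wp.
have -> : E p w = (w == a).
  apply/idP/eqP => [Epw | ->] //.
  by have := succ2P deg_p ab Epa Epb Epw; rewrite (negbTE wb) orbF => /eqP.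
have [-> | _] := eqVneq w a; last by rewrite andbF orbF muln0 addn0.
have -> : E u a = false by apply/negP => /(pred1P in_a Epa) pu; rewrite pu eqxx in up.
by case: (E u p).
Qed.

Lemma red_sum (F : V -> nat) (u : V') :
  \sum_(w : V') E' u w * F (val w) + E (val u) p * F p =
  \sum_w E (val u) w * F w + E (val u) p * F a.
Proof.
have [ub up] : val u != b /\ val u != p by apply/andP; exact: (valP u).
have Eub : E (val u) b = false.
  by apply/negP => /(pred1P in_b Epb) pu; move: up; rewrite -pu eqxx.
rewrite -(sum_sig2 (fun w => E (val u) w * F w) bp) Eub.
under eq_bigr do rewrite red_relE mulnDl -mulnA.
by rewrite big_split -big_distrr /= sum_sig_pred1 ?ab ?ap // mul0n addn0 addnAC.
Qed.

Lemma red_acyclic : acyclic E'.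
Proof.
have [m Em] := acyclic_rank_exists acE.
apply: (@acyclic_rank _ _ (fun u => m (val u))) => u w /orP[Euw | /andP[Eup Epw]].
  exact: Em.
exact: ltn_trans (Em _ _ Epw) (Em _ _ Eup).
Qed.

Lemma red_outdeg u : outdeg E' u = outdeg E (val u).
Proof.
by have := red_sum (fun=> 1) u; rewrite -!big_distrl -!outdegE /= !muln1 => /addIn.
Qed.

Lemma red_leaf u : is_leaf E' u = is_leaf E (val u).
Proof. by rewrite /is_leaf red_outdeg. Qed.

Lemma red_npaths (u x : V') : npaths E' u x = npaths E (val u) (val x).
Proof.
have [xb xp] : val x != b /\ val x != p by apply/andP; exact: (valP x).
have npaths_p : npaths E p (val x) = npaths E a (val x).
  rewrite (npaths_succ2 acE deg_p ab Epa Epb) 1?eq_sym //.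
  by rewrite (npaths_leaf _ acE lb) eq_sym (negbTE xb) addn0.
symmetry; move: u; apply: (npaths_unique (f := fun u => npaths E (val u) (val x)) red_acyclic) => u.
rewrite npaths_rec // val_eqE; congr addn.
apply: (@addIn (E (val u) p * npaths E a (val x))).
by rewrite -[in RHS]npaths_p (red_sum (npaths E ^~ (val x))).
Qed.

Lemma npaths_cherry_parent x : is_leaf E x -> npaths E p x = (x == a) + (x == b).
Proof.
move=> lx; have px : p != x by apply: contraNneq (nonleaf_of Epa) => ->.
by rewrite (npaths_succ2 acE deg_p ab Epa Epb px) !(npaths_leaf _ acE) // ![_ == x]eq_sym.
Qed.

Variables (ord : seq V) (j : nat).
Hypotheses (ordE : is_ordering E ord) (j_lt : j < size ord)
  (col_j : forall x, is_leaf E x -> npaths E (nth p ord j) x = (x == a) + (x == b)).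

Lemma red_reordering : exists2 ords : seq V, is_ordering E ords &
  [/\ size ords = size ord, nth p ords j = p &
      forall x, is_leaf E x -> anc_tuple E ords x = anc_tuple E ord x].
Proof.
have nonleaf_j : ~~ is_leaf E (nth p ord j) by rewrite -ordE.2 mem_nth.
exists (map (tperm p (nth p ord j)) ord).
  exact: is_ordering_tperm (nonleaf_of Epa) nonleaf_j.
split; first exact: size_map.
  by rewrite (nth_map p) // tpermR.
by move=> x lx; apply: anc_tuple_tperm; rewrite col_j // npaths_cherry_parent.
Qed.

Lemma red_profile : exists ord' : seq V',
  is_ordering E' ord' /\
  forall x sg, profile E' ord' val x sg <->
    [/\ is_leaf E x, x != b & sg = del_idx [:: j] (anc_tuple E ord x)].
Proof.
have [ords ordsE [size_ords nth_j anc_ords]] := red_reordering.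
have j_lt' : j < size ords by rewrite size_ords.
pose P v := (v != b) && (v != p).
have idx_j i : i < size ords -> (i \in [:: j]) = ~~ P (nth p ords i).
  move=> i_lt; have: nth p ords i \in ords by rewrite mem_nth.
  rewrite ordsE.2 /P inE negb_and !negbK => nonleaf_i.
  have -> : (nth p ords i == b) = false by apply: contraNF nonleaf_i => /eqP ->.
  by rewrite /= -[X in _ = (_ == X)]nth_j nth_uniq // ordsE.1.
pose tup x := del_idx [:: j] (anc_tuple E ord x).
have anc' u : is_leaf E (val u) -> anc_tuple E' (insub_seq P ords) u = tup (val u).
  move=> lu; rewrite /tup -anc_ords // [in RHS]/anc_tuple (del_idx_filter _ idx_j).
  by apply: anc_tuple_sub => w _; apply: red_npaths.
exists (insub_seq P ords); split; first exact: (@is_ordering_sub _ _ P _ red_leaf).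
move=> x sg; apply: iff_trans (profile_sub (tup := tup) red_leaf anc' x sg) _.
split=> [[lx /andP[xb _] ->] | [lx xb ->]]; split=> //.
by rewrite /P /= xb; apply: contraTneq lx => ->; apply: nonleaf_of Epa.
Qed.

End Reduce.

Section Cut.
Variables (V : finType) (E : rel V) (a b pa pb : V).
Hypotheses (acE : acyclic E) (ab : a != b) (la : is_leaf E a) (lb : is_leaf E b)
  (Epaa : E pa a) (Epbb : E pb b) (Epapb : E pa pb)
  (in_a : indeg E a = 1) (in_b : indeg E b = 1)
  (deg_pa : outdeg E pa <= 2) (deg_pb : outdeg E pb = 1).

Local Notation V' := (cut_vert pa pb).
Local Notation E' := (cut_rel E pa pb).

Let apa : a != pa. Proof. by apply: contraNneq (nonleaf_of Epaa) => <-. Qed.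
Let apb : a != pb. Proof. by apply: contraNneq (nonleaf_of Epbb) => <-. Qed.
Let bpa : b != pa. Proof. by apply: contraNneq (nonleaf_of Epaa) => <-. Qed.
Let bpb : b != pb. Proof. by apply: contraNneq (nonleaf_of Epbb) => <-. Qed.
Let papb : pa != pb.
Proof. by apply: contra_neq ab => papb; apply: succ1P deg_pb Epbb _; rewrite -papb. Qed.

Lemma cut_relE (u w : V') :
  E' u w = E (val u) (val w) + E (val u) pa * (val w == a) + E (val u) pb * (val w == b) :> nat.
Proof.
case: u w => [u uP] [w wP]; rewrite /cut_rel /=.
case/andP: uP => upa upb; case/andP: wP => wpa wpb; rewrite -!andbA.
have -> : E pa w && (w != pb) = (w == a).
  apply/andP/eqP => [[Epaw] | ->]; last by rewrite Epaa apb.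
  by have := succ2P deg_pa apb Epaa Epapb Epaw; rewrite (negbTE wpb) orbF => /eqP.
have -> : E pb w = (w == b) by apply/idP/eqP => [/(succ1P deg_pb Epbb) | ->].
rewrite upa andbT.
have [-> | wa] := eqVneq w a.
  have -> : E u a = false by apply/negP => /(pred1P in_a Epaa) pau; move: upa; rewrite -pau eqxx.
  by rewrite (negbTE ab) andbF muln0 addn0; case: (E u pa).
have [-> | wb] := eqVneq w b.
  have -> : E u b = false by apply/negP => /(pred1P in_b Epbb) pbu; move: upb; rewrite -pbu eqxx.
  by rewrite andbF muln0; case: (E u pb).
by rewrite !andbF !orbF !muln0 !addn0.
Qed.

Lemma cut_sum (F : V -> nat) (u : V') :
  \sum_(w : V') E' u w * F (val w) + E (val u) pa * F pa + E (val u) pb * F pb =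
  \sum_w E (val u) w * F w + E (val u) pa * F a + E (val u) pb * F b.
Proof.
rewrite -(sum_sig2 (fun w => E (val u) w * F w) papb).
under eq_bigr do rewrite cut_relE !mulnDl -!mulnA.
rewrite !big_split -!big_distrr /= !sum_sig_pred1 ?apa ?apb ?bpa ?bpb //.
by rewrite -!addnA; congr addn; rewrite addnA addnC -addnA.
Qed.

Lemma cut_acyclic : acyclic E'.
Proof.
have [m Em] := acyclic_rank_exists acE.
apply: (@acyclic_rank _ _ (fun u => m (val u))) => u w.
case/or3P => [Euw | /andP[/andP[Eu Ew] _] | /andP[/andP[Eu Ew] _]]; first exact: Em.
  exact: ltn_trans (Em _ _ Ew) (Em _ _ Eu).
exact: ltn_trans (Em _ _ Ew) (Em _ _ Eu).
Qed.

Lemma cut_outdeg u : outdeg E' u = outdeg E (val u).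
Proof.
by have := cut_sum (fun=> 1) u; rewrite -!big_distrl -!outdegE /= !muln1 => /addIn /addIn.
Qed.

Lemma cut_leaf u : is_leaf E' u = is_leaf E (val u).
Proof. by rewrite /is_leaf cut_outdeg. Qed.

Lemma cut_npaths (u x : V') : val x != b -> npaths E' u x = npaths E (val u) (val x).
Proof.
move=> xb; have [xpa xpb] : val x != pa /\ val x != pb by apply/andP; exact: (valP x).
have npaths_pb : npaths E pb (val x) = 0.
  by rewrite (npaths_succ1 acE deg_pb Epbb) 1?eq_sym // (npaths_leaf _ acE lb) eq_sym (negbTE xb).
have npaths_pa : npaths E pa (val x) = npaths E a (val x).
  by rewrite (npaths_succ2 acE deg_pa apb Epaa Epapb) 1?eq_sym // npaths_pb addn0.
symmetry; move: u; apply: (npaths_unique (f := fun u => npaths E (val u) (val x)) cut_acyclic) => u.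
rewrite npaths_rec // val_eqE; congr addn.
have := cut_sum (npaths E ^~ (val x)) u.
rewrite /= npaths_pa npaths_pb (npaths_leaf _ acE lb) eq_sym (negbTE xb).
by rewrite !muln0 !addn0 => /addIn ->.
Qed.

Lemma npaths_cut_pb x : is_leaf E x -> npaths E pb x = (x == b).
Proof.
move=> lx; have pbx : pb != x by apply: contraNneq (nonleaf_of Epbb) => ->.
by rewrite (npaths_succ1 acE deg_pb Epbb pbx) (npaths_leaf _ acE lb) eq_sym.
Qed.

Lemma npaths_cut_pa x : is_leaf E x -> npaths E pa x = (x == a) + (x == b).
Proof.
move=> lx; have pax : pa != x by apply: contraNneq (nonleaf_of Epaa) => ->.
rewrite (npaths_succ2 acE deg_pa apb Epaa Epapb pax) npaths_cut_pb //.
by rewrite (npaths_leaf _ acE la) eq_sym.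
Qed.

Lemma cut_npaths_leaf_b (u b' : V') : val b' = b ->
  npaths E' u b' + npaths E (val u) a = npaths E (val u) b + (val u == a).
Proof.
move=> b'E; pose a' : V' := exist _ a (introT andP (conj apa apb)).
have eq_a w : (val w == a) = (w == a') by rewrite -val_eqE.
have eq_b w : (val w == b) = (w == b') by rewrite -b'E val_eqE.
have E'ua' w : E' w a' = E (val w) pa :> nat.
  rewrite cut_relE /= eqxx (negbTE ab) muln1 muln0 addn0.
  suff -> : E (val w) a = false by [].
  by apply/negP => /(pred1P in_a Epaa) paw; have := valP w; rewrite -paw eqxx.
have npaths_a w : npaths E (val w) a = npaths E' w a' by rewrite cut_npaths.
rewrite npaths_a; move: u.
apply: (acyclic_rec_unique (r := fun u => (u == b') + (u == a')) cut_acyclic) => u.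
  rewrite (npaths_rec b' cut_acyclic) (npaths_rec a' cut_acyclic) addnACA; congr addn.
  by rewrite -big_split; apply: eq_bigr => w _; rewrite mulnDr.
have sum_b : \sum_w E (val u) w * npaths E w b = \sum_w E' u w * npaths E (val w) b + E' u a'.
  apply: (@addIn (E (val u) pb)); rewrite -addnA [E' u a' + _]addnC E'ua'.
  have := cut_sum (npaths E ^~ b) u.
  rewrite /= npaths_cut_pa // npaths_cut_pb // (npaths_leaf _ acE la) (npaths_leaf _ acE lb).
  rewrite eq_sym (negbTE ab) eqxx.
  by rewrite !muln1 muln0 addn0 => <-; rewrite [E (val u) pb + _]addnC addnA.
under eq_bigr do rewrite mulnDr eq_a.
rewrite big_split /= sum_mul_eq npaths_rec // sum_b eq_a eq_b.
by rewrite addnAC addnA.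
Qed.

Variables (ord : seq V) (j k : nat).
Hypotheses (ordE : is_ordering E ord) (j_lt : j < size ord) (k_lt : k < size ord)
  (col_j : forall x, is_leaf E x -> npaths E (nth pa ord j) x = (x == a) + (x == b))
  (col_k : forall x, is_leaf E x -> npaths E (nth pa ord k) x = (x == b)).

Lemma cut_reordering : exists2 ords : seq V, is_ordering E ords &
  [/\ size ords = size ord, nth pa ords j = pa, nth pa ords k = pb &
      forall x, is_leaf E x -> anc_tuple E ords x = anc_tuple E ord x].
Proof.
move: col_j col_k; set vj := nth pa ord j; set vk := nth pa ord k => col_vj col_vk.
have vk_vj : vk != vj.
  by apply/eqP => vkj; have := col_vk _ la; rewrite vkj col_vj // eqxx (negbTE ab).
have vk_pa : vk != pa.
  by apply/eqP => vkpa; have := col_vk _ la; rewrite vkpa npaths_cut_pa // eqxx (negbTE ab).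
have nonleaf_j : ~~ is_leaf E vj by rewrite -ordE.2 mem_nth.
have nonleaf_k : ~~ is_leaf E vk by rewrite -ordE.2 mem_nth.
exists (map (tperm pb vk) (map (tperm pa vj) ord)).
  apply: is_ordering_tperm (nonleaf_of Epbb) nonleaf_k.
  exact: is_ordering_tperm (nonleaf_of Epaa) nonleaf_j.
split; first by rewrite !size_map.
- by rewrite !(nth_map pa) ?size_map // -/vj tpermR tpermD // eq_sym.
- by rewrite !(nth_map pa) ?size_map // -/vk (@tpermD _ pa vj vk) 1?eq_sym // tpermR.
by move=> x lx; rewrite !anc_tuple_tperm // ?col_vj ?col_vk ?npaths_cut_pa ?npaths_cut_pb.
Qed.

Lemma cut_profile : exists ord' : seq V',
  is_ordering E' ord' /\
  forall x sg, profile E' ord' val x sg <->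
    [/\ is_leaf E x &
        sg = if x == b then
               [seq nth 0 (anc_tuple E ord b) i - nth 0 (anc_tuple E ord a) i
               | i <- iota 0 (size ord) & i \notin [:: j; k]]
             else del_idx [:: j; k] (anc_tuple E ord x)].
Proof.
have [ords ordsE [size_ords nth_j nth_k anc_ords]] := cut_reordering.
have [j_lt' k_lt'] : j < size ords /\ k < size ords by rewrite size_ords.
pose P v := (v != pa) && (v != pb).
have idx_jk i : i < size ords -> (i \in [:: j; k]) = ~~ P (nth pa ords i).
  move=> i_lt; rewrite /P negb_and !negbK !inE.
  rewrite -[X in _ = (_ == X) || _]nth_j -[X in _ = _ || (_ == X)]nth_k.
  by rewrite !nth_uniq // ordsE.1.
pose tup x := if x == b then
    [seq nth 0 (anc_tuple E ord b) i - nth 0 (anc_tuple E ord a) i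
    | i <- iota 0 (size ord) & i \notin [:: j; k]]
  else del_idx [:: j; k] (anc_tuple E ord x).
have anc' u : is_leaf E (val u) -> anc_tuple E' (insub_seq P ords) u = tup (val u).
  move=> lu; rewrite /tup; have [ub | ub] := eqVneq (val u) b.
    rewrite -!anc_ords // -size_ords.
    rewrite (map_iota_filter (g := fun v => npaths E v b - npaths E v a) idx_jk) => [|i i_lt].
      apply: anc_tuple_sub => w ords_w.
      have wa : val w != a by apply: contraTneq ords_w => ->; rewrite ordsE.2 la.
      by have := cut_npaths_leaf_b w ub; rewrite (negbTE wa) addn0 => <-; rewrite addnK.
    by rewrite !(anc_tuple_nth _ pa).
  rewrite -anc_ords // [in RHS]/anc_tuple (del_idx_filter _ idx_jk).
  by apply: anc_tuple_sub => w _; apply: cut_npaths.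
exists (insub_seq P ords); split; first exact: (@is_ordering_sub _ _ P _ cut_leaf).
move=> x sg; apply: iff_trans (profile_sub (tup := tup) cut_leaf anc' x sg) _.
split=> [[lx _ ->] | [lx ->]]; split=> //.
by apply/andP; split; apply: contraTneq lx => ->; [apply: nonleaf_of Epaa | apply: nonleaf_of Epbb].
Qed.

End Cut.

Unset Implicit Arguments.

Theorem lemma5p1 (V : finType) (E : rel V) (ord : seq V) :
  phylo_network E ->
  1 < #|[set x | is_leaf E x]| ->
  is_ordering E ord ->
  (forall (a b p : V) (j : nat),
      a != b -> is_leaf E a -> is_leaf E b -> E p a -> E p b ->
      j < size ord ->
      nth 0 (anc_tuple E ord a) j = 1 ->
      nth 0 (anc_tuple E ord b) j = 1 ->
      (forall x, is_leaf E x -> x != a -> x != b -> nth 0 (anc_tuple E ord x) j = 0) ->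
      exists ord' : seq (red_vert b p),
        is_ordering (red_rel E b p) ord' /\
        forall (x : V) (sg : seq nat),
          profile (red_rel E b p) ord' val x sg <->
          [/\ is_leaf E x, x != b & sg = del_idx [:: j] (anc_tuple E ord x)])
  /\
  (forall (a b pa pb : V) (j k : nat),
      a != b -> is_leaf E a -> is_leaf E b -> E pa a -> E pb b ->
      indeg E pb = 2 -> E pa pb ->
      j < size ord -> k < size ord ->
      nth 0 (anc_tuple E ord a) j = 1 ->
      nth 0 (anc_tuple E ord b) j = 1 ->
      (forall x, is_leaf E x -> x != a -> x != b -> nth 0 (anc_tuple E ord x) j = 0) ->
      nth 0 (anc_tuple E ord b) k = 1 ->
      (forall x, is_leaf E x -> x != b -> nth 0 (anc_tuple E ord x) k = 0) ->
      exists ord' : seq (cut_vert pa pb),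
        is_ordering (cut_rel E pa pb) ord' /\
        forall (x : V) (sg : seq nat),
          profile (cut_rel E pa pb) ord' val x sg <->
          [/\ is_leaf E x &
              sg = if x == b then
                     [seq nth 0 (anc_tuple E ord b) i - nth 0 (anc_tuple E ord a) i
                     | i <- iota 0 (size ord) & i \notin [:: j; k]]
                   else del_idx [:: j; k] (anc_tuple E ord x)]).
Proof.
move=> netE leaves2 ordE; have acE := network_acyclic netE.
have in_leaf v : is_leaf E v -> indeg E v = 1 by apply: leaf_indeg.
have col_ab a b p j : a != b -> j < size ord ->
    nth 0 (anc_tuple E ord a) j = 1 -> nth 0 (anc_tuple E ord b) j = 1 ->
    (forall x, is_leaf E x -> x != a -> x != b -> nth 0 (anc_tuple E ord x) j = 0) ->
    forall x, is_leaf E x -> npaths E (nth p ord j) x = (x == a) + (x == b).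
  move=> ab j_lt ja jb jx x lx; rewrite -(anc_tuple_nth _ _ _ j_lt).
  have [-> | xa] := eqVneq x a; first by rewrite ja (negbTE ab).
  by have [-> | xb] := eqVneq x b; [rewrite jb | rewrite jx].
split=> [a b p j ab la lb Epa Epb j_lt ja jb jx |
          a b pa pb j k ab la lb Epaa Epbb ret_pb Epapb j_lt k_lt ja jb jx kb kx].
  exact: (red_profile acE ab la lb Epa Epb (in_leaf _ la) (in_leaf _ lb)
    (outdeg_le2 netE leaves2 p) ordE j_lt (col_ab a b p j ab j_lt ja jb jx)).
apply: (cut_profile acE ab la lb Epaa Epbb Epapb (in_leaf _ la) (in_leaf _ lb)
  (outdeg_le2 netE leaves2 pa) (reticulation_outdeg netE leaves2 ret_pb) ordE j_lt k_lt
  (col_ab a b pa j ab j_lt ja jb jx)).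
move=> x lx; rewrite -(anc_tuple_nth _ _ _ k_lt).
by have [-> | xb] := eqVneq x b; [rewrite kb | rewrite kx].
Qed.
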